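(* Let $A,B\in\mathscr{B}(\Omega)$ with $\underline{P}(B)>0$ and $\underline{P}(B^c)>0$, and let $\mathcal{B}=\{B,B^c\}$. If $\mathcal{B}$ dilates $A$ under the Geometric rule, then it contracts $A$ under Dempster's rule. Similarly, if $\mathcal{B}$ dilates $A$ under Dempster's rule, then it contracts $A$ under the Geometric rule. In both cases, the contraction is strict if the corresponding dilation is strict.
   Context: $\Omega$ is a separable, completely metrizable space with Borel $\sigma$-algebra $\mathscr{B}(\Omega)$; $\underline{P}$ is a Choquet capacity of order 2 on $\mathscr{B}(\Omega)$ (a coherent lower probability with weakly compact set of dominating measures satisfying $\underline{P}(A\cup B)\ge\underline{P}(A)+\underline{P}(B)-\underline{P}(A\cap B)$ for all $A,B$); $\Pi=\{P:P\ge\underline{P}\}$, $\underline{P}(A)=\inf_{P\in\Pi}P(A)$, $\overline{P}(A)=\sup_{P\in\Pi}P(A)=1-\underline{P}(A^c)$. Dempster's rule: $\overline{P}_{\mathfrak{D}}(A\mid Z)=\overline{P}(A\cap Z)/\overline{P}(Z)$, $\underline{P}_{\mathfrak{D}}(A\mid Z)=1-\overline{P}_{\mathfrak{D}}(A^c\mid Z)$. Geometric rule: $\underline{P}_{\mathfrak{G}}(A\mid Z)=\underline{P}(A\cap Z)/\underline{P}(Z)$, $\overline{P}_{\mathfrak{G}}(A\mid Z)=1-\underline{P}_{\mathfrak{G}}(A^c\mid Z)$. For a rule with conditional lower/upper probabilities $\underline{P}_\bullet,\overline{P}_\bullet$: $\mathcal{B}$ strictly dilates $A$ if $\sup_{Z\in\mathcal{B}}\underline{P}_\bullet(A\mid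 Z)<\underline{P}(A)\le\overline{P}(A)<\inf_{Z\in\mathcal{B}}\overline{P}_\bullet(A\mid Z)$, and dilates $A$ if this holds with either (but not both) outer strict inequality allowed to be an equality; $\mathcal{B}$ strictly contracts $A$ if $\underline{P}(A)<\inf_{Z\in\mathcal{B}}\underline{P}_\bullet(A\mid Z)\le\sup_{Z\in\mathcal{B}}\overline{P}_\bullet(A\mid Z)<\overline{P}(A)$, and contracts $A$ if this holds with either (but not both) outer strict inequality allowed to be an equality. *)

From HB Require Import structures.
From mathcomp Require Import all_boot all_order all_algebra.
From mathcomp Require Import all_classical all_reals all_analysis.
Set Implicit Arguments. Unset Strict Implicit. Unset Printing Implicit Defensive.
Import Order.TTheory GRing.Theory Num.Theory.
Import numFieldNormedType.Exports.
Local Open Scope classical_set_scope.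
Local Open Scope ring_scope.

Definition separable_space (T : ptopologicalType) : Prop :=
  exists D : set T, countable D /\ closure D = setT.

Definition completely_metrizable (R : realType) (T : ptopologicalType) : Prop :=
  exists d : T -> T -> R,
    (forall x y, 0 <= d x y) /\
    (forall x y, d x y = 0 <-> x = y) /\
    (forall x y, d x y = d y x) /\
    (forall x y z, d x z <= d x y + d y z) /\
        (forall (x : T) (U : set T),
            nbhs x U <-> exists e : R, 0 < e /\ [set y | d x y < e] `<=` U) /\
        (forall u : nat -> T,
            (forall e : R, 0 < e -> exists N : nat, forall m n : nat,
                 (N <= m)%N -> (N <= n)%N -> d (u m) (u n) < e) ->
            exists x : T, u @ \oo --> x).

Definition borel (T : ptopologicalType) : measurableType (@open T).-sigma :=
  g_sigma_algebraType (@open T).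

Definition bounded_continuous (R : realType) (T : ptopologicalType)
  (f : T -> R) : Prop :=
  continuous f /\ exists M : R, forall x, `|f x| <= M.

(* A set of Borel probability measures is weakly compact: compact in the
   topology of weak convergence (the initial topology of the maps
   Q |-> \int f dQ, f bounded continuous); stated through the ultrafilter
   characterization of compactness (every ultrafilter containing the set
   converges to one of its points), where convergence in the initial
   topology means convergence of every coordinate map. *)
Definition weakly_compact (R : realType) (T : ptopologicalType)
  (Pi : set (probability (borel T) R)) : Prop :=
  forall F : set_system (probability (borel T) R),
    UltraFilter F -> F Pi ->
    exists2 P, Pi P &
      forall f : T -> R, bounded_continuous f ->
        (fun Q : probability (borel T) R => (\int[Q]_x (f x)%:E)%E) @ F
          --> (\int[P]_x (f x)%:E)%E.

Definition core (R : realType) (T : ptopologicalType) (lP : set T -> R) :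
  set (probability (borel T) R) :=
  [set P | forall A : set (borel T), measurable A -> (lP A)%:E <= P A]%E.

(* lP is a Choquet capacity of order 2 on B(Omega): a coherent lower
   probability (lower envelope of its core) whose core is weakly compact
   and which is 2-monotone. *)
Definition capacity2 (R : realType) (T : ptopologicalType) (lP : set T -> R)
  : Prop :=
  [/\ (forall A : set (borel T), measurable A ->
         (lP A)%:E = ereal_inf [set P A | P in core lP]),
      weakly_compact (core lP) &
      (forall A B : set (borel T), measurable A -> measurable B ->
         lP A + lP B - lP (A `&` B) <= lP (A `|` B))].

Definition upperP (R : realType) (T : Type) (lP : set T -> R) (A : set T) : R :=
  1 - lP (~` A).

(* An updating rule gives conditional lower and upper probabilities
   (first argument: event A, second: conditioning event Z). *)
Record rule (R : realType) (T : Type) := Rule {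
  lcond : set T -> set T -> R;
  ucond : set T -> set T -> R }.

Definition dempster_rule (R : realType) (T : Type) (lP : set T -> R) : rule R T :=
  let uD := fun A Z => upperP lP (A `&` Z) / upperP lP Z in
  Rule (fun A Z => 1 - uD (~` A) Z) uD.

Definition geometric_rule (R : realType) (T : Type) (lP : set T -> R) : rule R T :=
  let lG := fun A Z => lP (A `&` Z) / lP Z in
  Rule lG (fun A Z => 1 - lG (~` A) Z).

Definition sup_cond (R : realType) (T : Type) (c : set T -> set T -> R)
  (A : set T) (BB : set (set T)) : R := sup [set c A Z | Z in BB].
Definition inf_cond (R : realType) (T : Type) (c : set T -> set T -> R)
  (A : set T) (BB : set (set T)) : R := inf [set c A Z | Z in BB].

Definition strictly_dilates (R : realType) (T : Type) (lP : set T -> R)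
  (r : rule R T) (BB : set (set T)) (A : set T) : Prop :=
  [/\ sup_cond (lcond r) A BB < lP A, lP A <= upperP lP A &
      upperP lP A < inf_cond (ucond r) A BB].

Definition dilates (R : realType) (T : Type) (lP : set T -> R)
  (r : rule R T) (BB : set (set T)) (A : set T) : Prop :=
  ([/\ sup_cond (lcond r) A BB < lP A, lP A <= upperP lP A &
       upperP lP A <= inf_cond (ucond r) A BB] \/
   [/\ sup_cond (lcond r) A BB <= lP A, lP A <= upperP lP A &
       upperP lP A < inf_cond (ucond r) A BB]).

Definition strictly_contracts (R : realType) (T : Type) (lP : set T -> R)
  (r : rule R T) (BB : set (set T)) (A : set T) : Prop :=
  [/\ lP A < inf_cond (lcond r) A BB,
      inf_cond (lcond r) A BB <= sup_cond (ucond r) A BB &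
      sup_cond (ucond r) A BB < upperP lP A].

Definition contracts (R : realType) (T : Type) (lP : set T -> R)
  (r : rule R T) (BB : set (set T)) (A : set T) : Prop :=
  ([/\ lP A < inf_cond (lcond r) A BB,
       inf_cond (lcond r) A BB <= sup_cond (ucond r) A BB &
       sup_cond (ucond r) A BB <= upperP lP A] \/
   [/\ lP A <= inf_cond (lcond r) A BB,
       inf_cond (lcond r) A BB <= sup_cond (ucond r) A BB &
       sup_cond (ucond r) A BB < upperP lP A]).

From mathcomp Require Import all_boot all_order all_algebra.
From mathcomp Require Import all_classical all_reals all_analysis.
From mathcomp Require Import ring lra.
Set Implicit Arguments. Unset Strict Implicit. Unset Printing Implicit Defensive.
Import Order.TTheory GRing.Theory Num.Theory.
Local Open Scope classical_set_scope.
Local Open Scope ring_scope.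

(* If 0 < lP Z < 1, the 2-monotonicity inequality for A and Z reads
     lP A <= lP Z * lG(A|Z) + (1 - lP Z) * lD(A|Z^c),
   where lG and lD are the Geometric and Dempster lower conditionals; dually
   the upper probability of A dominates the same convex combination of the
   upper conditionals.  Hence lG(A|Z) <= lP A forces lP A <= lD(A|Z^c) and
   vice versa, strictly if the hypothesis is strict.  As Z |-> Z^c permutes
   {B, B^c}, a dilation under one rule becomes a contraction under the
   other. *)

Lemma le_conv_transfer (R : realFieldType) (w x y p : R) : 0 < w -> w < 1 ->
  p <= w * x + (1 - w) * y ->
  [/\ x <= p -> p <= y, x < p -> p < y, y <= p -> p <= x & y < p -> p < x].
Proof.
move=> w0 w1 hp; split=> hxy; [case: leP|case: ltP|case: leP|case: ltP] => // h.
all: exfalso; nra.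
Qed.

Lemma ge_conv_transfer (R : realFieldType) (w x y u : R) : 0 < w -> w < 1 ->
  w * x + (1 - w) * y <= u ->
  [/\ u <= x -> y <= u, u < x -> y < u, u <= y -> x <= u & u < y -> x < u].
Proof.
move=> w0 w1 hu; split=> hxy; [case: leP|case: ltP|case: leP|case: ltP] => // h.
all: exfalso; nra.
Qed.

Lemma sup_set2 (R : realType) (a b : R) : sup [set a; b] = Num.max a b.
Proof.
apply/le_anti/andP; split.
- apply: ge_sup; first by exists a; left.
  by move=> x [->|->]; rewrite ?le_max lexx ?orbT.
- have hl : has_ubound [set a; b].
    by exists (Num.max a b) => x [->|->]; rewrite le_max lexx ?orbT.
  by rewrite ge_max; apply/andP; split; apply: ub_le_sup => //; [left|right].
Qed.

Lemma inf_set2 (R : realType) (a b : R) : inf [set a; b] = Num.min a b.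
Proof.
apply/le_anti/andP; split.
- have hl : has_lbound [set a; b].
    by exists (Num.min a b) => x [->|->]; rewrite ge_min lexx ?orbT.
  by rewrite le_min; apply/andP; split; apply: ge_inf => //; [left|right].
- apply: (@lb_le_inf _ _ (Num.min a b)); first by exists a; left.
  by move=> x [->|->]; rewrite ?ge_min lexx ?orbT.
Qed.

Lemma image_set2 (T U : Type) (f : T -> U) (X Y : T) :
  f @` [set X; Y] = [set f X; f Y].
Proof. by rewrite image_setU !image_set1. Qed.

Section Conditioning.
Variables (R : realType) (d : measure_display) (T : measurableType d).
Variable lP : set T -> R.

Local Notation G := (geometric_rule lP).
Local Notation D := (dempster_rule lP).

Lemma sup_cond_set2 (c : set T -> set T -> R) (A X Y : set T) :
  sup_cond c A [set X; Y] = Num.max (c A X) (c A Y).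
Proof. by rewrite /sup_cond image_set2 sup_set2. Qed.

Lemma inf_cond_set2 (c : set T -> set T -> R) (A X Y : set T) :
  inf_cond c A [set X; Y] = Num.min (c A X) (c A Y).
Proof. by rewrite /inf_cond image_set2 inf_set2. Qed.

(* Pointwise form of "a dilation by r at Z forces a contraction by s at Z'". *)
Definition reverses (r s : rule R T) (A Z Z' : set T) : Prop :=
  [/\ lcond r A Z <= lP A -> lP A <= lcond s A Z',
      lcond r A Z < lP A -> lP A < lcond s A Z',
      upperP lP A <= ucond r A Z -> ucond s A Z' <= upperP lP A &
      upperP lP A < ucond r A Z -> ucond s A Z' < upperP lP A].

Lemma contracts_of_dilates (r s : rule R T) (A X Y : set T) :
  reverses r s A X Y -> reverses r s A Y X -> lcond s A X <= ucond s A X ->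
  (dilates lP r [set X; Y] A -> contracts lP s [set X; Y] A) /\
  (strictly_dilates lP r [set X; Y] A -> strictly_contracts lP s [set X; Y] A).
Proof.
move=> [l1 l1' u1 u1'] [l2 l2' u2 u2'] lu.
have mid : Num.min (lcond s A X) (lcond s A Y) <=
           Num.max (ucond s A X) (ucond s A Y) by rewrite ge_min le_max lu.
rewrite /dilates /strictly_dilates /contracts /strictly_contracts.
rewrite !sup_cond_set2 !inf_cond_set2 mid.
rewrite ?gt_max ?ge_max ?lt_min ?le_min.
split.
- case=> -[/andP[g1 g2] _ /andP[h1 h2]]; [left|right]; split=> //.
  + by rewrite (l2' g2) (l1' g1).
  + by rewrite (u2 h2) (u1 h1).
  + by rewrite (l2 g2) (l1 g1).
  + by rewrite (u2' h2) (u1' h1).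
- case=> /andP[g1 g2] _ /andP[h1 h2]; split=> //.
  + by rewrite (l2' g2) (l1' g1).
  + by rewrite (u2' h2) (u1' h1).
Qed.

Hypothesis lP_2monotone : forall X Y : set T, measurable X -> measurable Y ->
  lP X + lP Y - lP (X `&` Y) <= lP (X `|` Y).

Lemma ucond_geometric (A Z : set T) : ucond G A Z = 1 - lcond G (~` A) Z.
Proof. by []. Qed.

Lemma ucond_dempster (A Z : set T) : ucond D A Z = 1 - lcond D (~` A) Z.
Proof. by rewrite /= setCK subKr. Qed.

Lemma conv_lcond_geometric_dempster (A Z : set T) : lP Z != 0 -> lP Z != 1 ->
  lP Z * lcond G A Z + (1 - lP Z) * lcond D A (~` Z) =
  lP (A `&` Z) + lP (A `|` Z) - lP Z.
Proof.
move=> Z0 Z1; rewrite /= /upperP setCI !setCK; field.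
by rewrite Z0 andbT subr_eq0 eq_sym.
Qed.

Lemma lP_le_conv_lcond (A Z : set T) : measurable A -> measurable Z ->
  0 < lP Z -> lP Z < 1 ->
  lP A <= lP Z * lcond G A Z + (1 - lP Z) * lcond D A (~` Z).
Proof.
move=> mA mZ Z0 Z1.
rewrite conv_lcond_geometric_dempster ?(gt_eqF Z0) ?(lt_eqF Z1) //.
by have := lP_2monotone mA mZ; lra.
Qed.

Lemma conv_ucond_le_upperP (A Z : set T) : measurable A -> measurable Z ->
  0 < lP Z -> lP Z < 1 ->
  lP Z * ucond G A Z + (1 - lP Z) * ucond D A (~` Z) <= upperP lP A.
Proof.
move=> mA mZ Z0 Z1; rewrite ucond_geometric ucond_dempster /upperP.
by have := lP_le_conv_lcond (measurableC mA) mZ Z0 Z1; lra.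
Qed.

Lemma geometric_dempster_reverse (A Z : set T) : measurable A -> measurable Z ->
  0 < lP Z -> lP Z < 1 ->
  reverses G D A Z (~` Z) /\ reverses D G A (~` Z) Z.
Proof.
move=> mA mZ Z0 Z1.
have [lGD lGD' lDG lDG'] :=
  le_conv_transfer Z0 Z1 (lP_le_conv_lcond mA mZ Z0 Z1).
have [uGD uGD' uDG uDG'] :=
  ge_conv_transfer Z0 Z1 (conv_ucond_le_upperP mA mZ Z0 Z1).
by split; split.
Qed.

Hypothesis lP0 : lP set0 = 0.
Hypothesis lPT : lP setT = 1.

Lemma lP_lt1 (Z : set T) : measurable Z -> 0 < lP (~` Z) -> lP Z < 1.
Proof.
move=> mZ Zc0; have := lP_2monotone mZ (measurableC mZ).
by rewrite setICr setUCr lP0 lPT; lra.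
Qed.

Lemma lcond_le_ucond_geometric (A Z : set T) : measurable A -> measurable Z ->
  0 < lP Z -> lcond G A Z <= ucond G A Z.
Proof.
move=> mA mZ Z0; have mAc := measurableC mA.
have := lP_2monotone (measurableI _ _ mA mZ) (measurableI _ _ mAc mZ).
rewrite setIACA setICr set0I -setIUl setUCr setTI lP0 /=.
have -> : 1 - lP (~` A `&` Z) / lP Z = (lP Z - lP (~` A `&` Z)) / lP Z.
  by field; rewrite gt_eqF.
by rewrite ler_pM2r ?invr_gt0 //; lra.
Qed.

Lemma lcond_le_ucond_dempster (A Z : set T) : measurable A -> measurable Z ->
  lP (~` Z) < 1 -> lcond D A Z <= ucond D A Z.
Proof.
move=> mA mZ Zc1; have [mAc mZc] := (measurableC mA, measurableC mZ).
have := lP_2monotone (measurableU _ _ mA mZc) (measurableU _ _ mAc mZc).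
rewrite -setUIl setICr set0U setUACA setUCr setUid setTU lPT /= /upperP.
rewrite !setCI !setCK.
have Zc0 : 0 < 1 - lP (~` Z) by lra.
have -> : 1 - (1 - lP (A `|` ~` Z)) / (1 - lP (~` Z)) =
          (lP (A `|` ~` Z) - lP (~` Z)) / (1 - lP (~` Z)).
  by field; rewrite gt_eqF.
by rewrite ler_pM2r ?invr_gt0 //; lra.
Qed.

End Conditioning.

Lemma capacity2_eq_cst (R : realType) (T : ptopologicalType) (lP : set T -> R)
    (X : set (borel T)) (c : R) :
  capacity2 lP -> measurable X ->
  (forall P : probability (borel T) R, P X = c%:E) -> lP X = c.
Proof.
case=> coh _ _ mX hc.
have [P CP] : core lP !=set0.
  apply/set0P/negP => /eqP C0.
  by have := coh setT measurableT; rewrite C0 image_set0 ereal_inf0.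
apply/eqP; rewrite -eqe coh // -[c%:E]ereal_inf1; apply/eqP; congr ereal_inf.
apply/seteqP; split => [_ [Q _ <-] //|_ ->].
by exists P.
Qed.

Theorem theorem5p9 (R : realType) (T : ptopologicalType)
  (hsep : separable_space T) (hcm : completely_metrizable R T)
  (lP : set T -> R) (hcap : capacity2 lP)
  (A B : set (borel T)) (mA : measurable A) (mB : measurable B)
  (hB : 0 < lP B) (hBc : 0 < lP (~` B)) :
  let BB := [set B; ~` B] in
  (dilates lP (geometric_rule lP) BB A -> contracts lP (dempster_rule lP) BB A) /\
  (strictly_dilates lP (geometric_rule lP) BB A ->
     strictly_contracts lP (dempster_rule lP) BB A) /\
  (dilates lP (dempster_rule lP) BB A -> contracts lP (geometric_rule lP) BB A) /\
  (strictly_dilates lP (dempster_rule lP) BB A ->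
     strictly_contracts lP (geometric_rule lP) BB A).
Proof.
move=> BB.
have lP0 : lP set0 = 0 by apply: capacity2_eq_cst => // P; exact: measure0.
have lPT : lP setT = 1 by apply: capacity2_eq_cst => // P; exact: probability_setT.
have mono : forall X Y : set (borel T), measurable X -> measurable Y ->
    lP X + lP Y - lP (X `&` Y) <= lP (X `|` Y) by case: hcap.
have mBc := measurableC mB.
have hB1 : lP B < 1 := lP_lt1 mono lP0 lPT mB hBc.
have hBc1 : lP (~` B) < 1.
  by apply: (lP_lt1 mono lP0 lPT mBc); rewrite setCK.
have [GD1 DG1] := geometric_dempster_reverse mono mA mB hB hB1.
have [GD2 DG2] := geometric_dempster_reverse mono mA mBc hBc hBc1.
rewrite setCK in GD2 DG2.
have [GD GDs] := contracts_of_dilates GD1 GD2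
  (lcond_le_ucond_dempster mono lPT mA mB hBc1).
have [DG DGs] := contracts_of_dilates DG2 DG1
  (lcond_le_ucond_geometric mono lP0 mA mB hB).
by [].
Qed.
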